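(* Let $M$ be a monotone triangle with $n$ rows and strictly increasing bottom row. Then the sum of the weights $\mathrm{W}(A)$ over all arrowed monotone triangles $A$ whose underlying monotone triangle (forgetting decorations) is $M$ equals $\prod_{i=1}^n(uX_i+vX_i^{-1}+w)\cdot\mathrm{W}_0(M)$.
   Context: Monotone triangle: array $(m_{i,j})_{1\le j\le i\le n}$ of integers with $m_{i+1,j}\le m_{i,j}\le m_{i+1,j+1}$, $m_{i,j}<m_{i,j+1}$. Northwest/northeast-neighbours of $m_{i,j}$: $m_{i-1,j-1}$, $m_{i-1,j}$. An arrowed monotone triangle decorates every entry by one of $\nwarrow,\nearrow,\nwarrow\!\nearrow$ such that an entry equal to its northwest-neighbour carries $\nearrow$ and an entry equal to its northeast-neighbour carries $\nwarrow$; its weight is $\mathrm{W}(A)=u^{\#\nearrow}v^{\#\nwarrow}w^{\#\nwarrow\nearrow}\prod_iX_i^{(\text{sum of row }i)-(\text{sum of row }i-1)+(\#\nearrow\text{ in row }i)-(\#\nwarrow\text{ in row }i)}$ (sum of row $0$ is $0$). For $M$, an entry $m_{i,j}$ with $i<n$ is special if $m_{i+1,j}<m_{i,j}<m_{i+1,j+1}$, left-leaning if $m_{i,j}=m_{i+1,j}$, right-leaning if $m_{i,j}=m_{i+1,j+1}$; $s_i,l_i,r_i$ count these in row $i$, $s_0=l_0=r_0=0$, $l(M)=\sum l_i$, $r(M)=\sum r_i$, $d_i(M)=\sum_j m_{i,j}-\sum_j m_{i-1,j}+r_{i-1}-l_{i-1}$, and $\mathrm{W}_0(M)=u^{r(M)}v^{l(M)}\prod_iX_i^{d_i(M)}(w+uX_i+vX_i^{-1})^{s_{i-1}(M)}$.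 *)

From HB Require Import structures.
From mathcomp Require Import all_boot all_order all_algebra.
Set Implicit Arguments. Unset Strict Implicit. Unset Printing Implicit Defensive.
Import Order.TTheory GRing.Theory Num.Theory.
Local Open Scope ring_scope.

(* A triangular array is a function m : nat -> nat -> int, read with the
   paper's 1-based indices: m i j is m_{i,j}, only 1 <= j <= i <= n matter. *)

Definition is_monotone_triangle (n : nat) (m : nat -> nat -> int) : Prop :=
  (forall i j : nat, (1 <= j)%N -> (j < i)%N -> (i <= n)%N -> m i j < m i j.+1) /\
  (forall i j : nat, (1 <= j)%N -> (j <= i)%N -> (i < n)%N ->
      m i.+1 j <= m i j /\ m i j <= m i.+1 j.+1).

(* positions of a triangle with n rows, 0-based: (a,b) with b <= a < n,
   standing for the entry m_{a+1,b+1} *)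
Definition pos (n : nat) := {p : 'I_n * 'I_n | (p.2 <= p.1)%N}.
Definition prow n (p : pos n) : nat := (val p).1.+1.
Definition pcol n (p : pos n) : nat := (val p).2.+1.

(* decorations: code 0 = \nwarrow, 1 = \nearrow, 2 = \nwarrow\nearrow *)
Definition isNW (c : 'I_3) : bool := val c == 0%N.
Definition isNE (c : 'I_3) : bool := val c == 1%N.
Definition isBoth (c : 'I_3) : bool := val c == 2%N.

Definition arrowed_ok n (m : nat -> nat -> int) (D : {ffun pos n -> 'I_3}) : bool :=
  [forall p : pos n,
    ((2 <= pcol p)%N && (m (prow p) (pcol p) == m (prow p).-1 (pcol p).-1) ==> isNE (D p)) &&
    ((pcol p < prow p)%N && (m (prow p) (pcol p) == m (prow p).-1 (pcol p)) ==> isNW (D p))].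

Definition rowsum (m : nat -> nat -> int) (i : nat) : int :=
  \sum_(1 <= j < i.+1) m i j.

Definition cnt n (P : 'I_3 -> bool) (D : {ffun pos n -> 'I_3}) : nat :=
  #|[set p : pos n | P (D p)]|.
Definition cnt_row n (P : 'I_3 -> bool) (D : {ffun pos n -> 'I_3}) (i : nat) : nat :=
  #|[set p : pos n | (prow p == i) && P (D p)]|.

Definition Wt (R : fieldType) (u v w : R) (X : nat -> R) n (m : nat -> nat -> int)
    (D : {ffun pos n -> 'I_3}) : R :=
  u ^+ cnt isNE D * v ^+ cnt isNW D * w ^+ cnt isBoth D *
  \prod_(1 <= i < n.+1)
     X i ^ (rowsum m i - rowsum m i.-1 + (cnt_row isNE D i)%:Z - (cnt_row isNW D i)%:Z).

(* s_i, l_i, r_i for 1 <= i < n; 0 otherwise (in particular for i = 0) *)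
Definition s_cnt n (m : nat -> nat -> int) (i : nat) : nat :=
  if (1 <= i < n)%N then \sum_(1 <= j < i.+1) ((m i.+1 j < m i j) && (m i j < m i.+1 j.+1) : nat)
  else 0.
Definition l_cnt n (m : nat -> nat -> int) (i : nat) : nat :=
  if (1 <= i < n)%N then \sum_(1 <= j < i.+1) ((m i j == m i.+1 j) : nat) else 0.
Definition r_cnt n (m : nat -> nat -> int) (i : nat) : nat :=
  if (1 <= i < n)%N then \sum_(1 <= j < i.+1) ((m i j == m i.+1 j.+1) : nat) else 0.

Definition lM n m : nat := \sum_(1 <= i < n) l_cnt n m i.
Definition rM n m : nat := \sum_(1 <= i < n) r_cnt n m i.

Definition dM n (m : nat -> nat -> int) (i : nat) : int :=
  rowsum m i - rowsum m i.-1 + (r_cnt n m i.-1)%:Z - (l_cnt n m i.-1)%:Z.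

Definition W0 (R : fieldType) (u v w : R) (X : nat -> R) n (m : nat -> nat -> int) : R :=
  u ^+ rM n m * v ^+ lM n m *
  \prod_(1 <= i < n.+1) (X i ^ dM n m i * (w + u * X i + v * (X i)^-1) ^+ s_cnt n m i.-1).

From HB Require Import structures.
From mathcomp Require Import all_boot all_order all_algebra.
From mathcomp Require Import ring zify.
Import Order.TTheory GRing.Theory Num.Theory.
Local Open Scope ring_scope.

(* The weight W(A) of an arrowed monotone triangle (M, D)
   factors as a part depending on M only (the row-sum exponents of the X_i)
   times a product, over all entries p, of a local weight depending only on
   the decoration D p and on X_{row p}: u X for \nearrow, v X^-1 for
   \nwarrow and w for \nwarrow\nearrow.  The admissibility condition on D is
   also local, so the sum over D distributes into a product over entries of
   local sums.  By strictness of the rows an entry cannot equal both its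
   northwest and northeast neighbour, so each local sum is u X_i (forced
   \nearrow), v X_i^-1 (forced \nwarrow) or u X_i + v X_i^-1 + w (free).
   Counting the entries of row i of each kind gives r_{i-1}, l_{i-1} and
   s_{i-1} + 1 (every entry of row i-1 is left-leaning, right-leaning or
   special, and the last entry of row i is free), which yields the product
   formula of the theorem. *)

Definition entry_weight (R : fieldType) (u v w x : R) (c : 'I_3) : R :=
  (if isNE c then u * x else 1) * (if isNW c then v * x^-1 else 1) *
  (if isBoth c then w else 1).
Arguments entry_weight {R}.

Definition ne_forced (m : nat -> nat -> int) (i j : nat) : bool :=
  (2 <= j)%N && (m i j == m i.-1 j.-1).
Definition nw_forced (m : nat -> nat -> int) (i j : nat) : bool :=
  (j < i)%N && (m i j == m i.-1 j).

Definition entry_ok n (m : nat -> nat -> int) (p : pos n) (c : 'I_3) : bool :=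
  (ne_forced m (prow p) (pcol p) ==> isNE c) && (nw_forced m (prow p) (pcol p) ==> isNW c).
Arguments entry_ok {n}.

(* The sum of the local weights over the admissible decorations of m_{i,j}. *)
Definition entry_factor (R : fieldType) (u v w : R) (X : nat -> R)
    (m : nat -> nat -> int) (i j : nat) : R :=
  if ne_forced m i j then u * X i
  else if nw_forced m i j then v * (X i)^-1
  else u * X i + v * (X i)^-1 + w.
Arguments entry_factor {R}.

Lemma pos_bounds {n} (p : pos n) : (1 <= pcol p)%N /\ (pcol p <= prow p)%N /\ (prow p <= n)%N.
Proof. by case: p => [[a b] /= h]; rewrite /pcol /prow /=; do !split => //; apply: ltn_ord. Qed.

Lemma prod_pos (R : comPzRingType) n (F : nat -> nat -> R) :
  \prod_(p : pos n) F (prow p) (pcol p) = \prod_(1 <= i < n.+1) \prod_(1 <= j < i.+1) F i j.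
Proof.
rewrite /prow /pcol.
rewrite -(big_sub [pred q : 'I_n * 'I_n | (q.2 <= q.1)%N] (fun q => F q.1.+1 q.2.+1)).
rewrite -(pair_big_dep xpredT (fun a b : 'I_n => (b <= a)%N) (fun a b : 'I_n => F a.+1 b.+1)) /=.
rewrite big_add1 /= big_mkord; apply: eq_bigr => a _.
by rewrite big_add1 /= (big_nat_widen 0 a.+1 n) // big_mkord; apply: eq_bigl.
Qed.

Lemma expr_cnt (R : comPzRingType) n (P : 'I_3 -> bool) (D : {ffun pos n -> 'I_3}) (x : R) :
  x ^+ cnt P D = \prod_(p : pos n) (if P (D p) then x else 1).
Proof. by rewrite /cnt -prodr_const big_mkcond; apply: eq_bigr => p _; rewrite inE. Qed.

Lemma expr_cnt_row (R : comPzRingType) n (P : 'I_3 -> bool) (D : {ffun pos n -> 'I_3})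
    (G : nat -> R) :
  \prod_(1 <= i < n.+1) G i ^+ cnt_row P D i =
  \prod_(p : pos n) (if P (D p) then G (prow p) else 1).
Proof.
under eq_bigr do rewrite /cnt_row -prodr_const big_mkcond.
rewrite exchange_big /=; apply: eq_bigr => p _.
under eq_bigr do rewrite inE.
case: (P (D p)); last by rewrite big1 // => i _; rewrite andbF.
under eq_bigr do rewrite andbT.
rewrite -big_mkcond (eq_bigl (fun i => i == prow p)); last by move=> i; rewrite eq_sym.
have [_ [_ hp]] := pos_bounds p.
by rewrite big_nat1_eq /= ltnS hp.
Qed.

Lemma expfz_shift (R : fieldType) (x : R) (a : int) (b c : nat) : x != 0 ->
  x ^ (a + b%:Z - c%:Z) = x ^ a * x ^+ b * x^-1 ^+ c.
Proof. by move=> hx; rewrite !expfzDr // exprVn exprnN -exprnP. Qed.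

Lemma prod_if_mul (R : comPzRingType) (I : finType) (P : pred I) (a b : I -> R) :
  \prod_(p : I) (if P p then a p * b p else 1) =
  \prod_(p : I) (if P p then a p else 1) * \prod_(p : I) (if P p then b p else 1).
Proof. by rewrite -!big_mkcond big_split. Qed.

Lemma Wt_factor (R : fieldType) (u v w : R) (X : nat -> R) n (m : nat -> nat -> int)
    (D : {ffun pos n -> 'I_3}) :
  (forall i, (1 <= i <= n)%N -> X i != 0) ->
  Wt u v w X m D = \prod_(1 <= i < n.+1) X i ^ (rowsum m i - rowsum m i.-1) *
     \prod_(p : pos n) entry_weight u v w (X (prow p)) (D p).
Proof.
move=> hX; rewrite /Wt (eq_big_nat _ _ (F2 := fun i =>
   X i ^ (rowsum m i - rowsum m i.-1) * X i ^+ cnt_row isNE D i *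
   (X i)^-1 ^+ cnt_row isNW D i)); last by move=> i hi; rewrite expfz_shift ?hX.
rewrite !big_split /= !expr_cnt_row !expr_cnt /entry_weight.
rewrite (@prod_if_mul _ _ (fun p => isNE (D p)) (fun=> u) (fun p => X (prow p))).
rewrite (@prod_if_mul _ _ (fun p => isNW (D p)) (fun=> v) (fun p => (X (prow p))^-1)).
ring.
Qed.

Lemma sum_ffun_prod (R : comPzRingType) n (Q : pos n -> pred 'I_3) (F : pos n -> 'I_3 -> R) :
  \sum_(D : {ffun pos n -> 'I_3} | [forall p, Q p (D p)]) \prod_p F p (D p) =
  \prod_p \sum_(c | Q p c) F p c.
Proof.
rewrite bigA_distr_big_dep; apply: eq_bigl => D.
by apply/forallP/familyP => H p; have := H p.
Qed.

(* Since rows are strictly increasing, no entry equals both of its upper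
   neighbours. *)
Lemma forced_excl {n} {m : nat -> nat -> int} {i j : nat} : is_monotone_triangle n m ->
  (1 <= j)%N -> (j <= i)%N -> (i <= n)%N -> ~~ (ne_forced m i j && nw_forced m i j).
Proof.
move=> [row_incr _] hj hji hi.
apply/negP => /andP[/andP[h2 /eqP e1] /andP[hlt /eqP e2]].
have h : m i.-1 j.-1 < m i.-1 j.-1.+1 by apply: row_incr; lia.
by move: h; rewrite prednK; [rewrite -e1 -e2 ltxx | lia].
Qed.

Lemma sum_entry_weight (R : fieldType) (u v w x : R) (A B : bool) : ~~ (A && B) ->
  \sum_(c : 'I_3 | (A ==> isNE c) && (B ==> isNW c)) entry_weight u v w x c =
  if A then u * x else if B then v * x^-1 else u * x + v * x^-1 + w.
Proof.
rewrite big_mkcond !big_ord_recl big_ord0 /entry_weight /isNE /isNW /isBoth /bump /=.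
by case: A; case: B => //= _; ring.
Qed.

Lemma sum_entry_ok (R : fieldType) (u v w : R) (X : nat -> R) n (m : nat -> nat -> int)
    (p : pos n) : is_monotone_triangle n m ->
  \sum_(c | entry_ok m p c) entry_weight u v w (X (prow p)) c =
  entry_factor u v w X m (prow p) (pcol p).
Proof.
move=> Hm; have [h1 [h2 h3]] := pos_bounds p.
by rewrite /entry_factor sum_entry_weight // (forced_excl Hm).
Qed.

Lemma prod_trichotomy (R : comPzRingType) (A B T : R) (a b : nat -> bool) lo hi :
  (forall j, (lo <= j < hi)%N -> ~~ (a j && b j)) ->
  \prod_(lo <= j < hi) (if a j then A else if b j then B else T) =
  A ^+ (\sum_(lo <= j < hi) a j) * B ^+ (\sum_(lo <= j < hi) b j) *
  T ^+ (\sum_(lo <= j < hi) ~~ (a j || b j)).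
Proof.
move=> ab_excl; rewrite -!prodrXr -!big_split /=; apply: eq_big_nat => j /ab_excl.
by case: (a j); case: (b j) => //= _; rewrite ?expr0 ?expr1 ?mulr1 ?mul1r.
Qed.

Lemma count_trichotomy (a b : nat -> bool) lo hi :
  (forall j, (lo <= j < hi)%N -> ~~ (a j && b j)) ->
  (\sum_(lo <= j < hi) a j + \sum_(lo <= j < hi) b j +
   \sum_(lo <= j < hi) ~~ (a j || b j))%N = (hi - lo)%N.
Proof.
move=> ab_excl; rewrite -!big_split /= -[(hi - lo)%N]muln1 -sum_nat_const_nat.
by apply: eq_big_nat => j /ab_excl; case: (a j); case: (b j).
Qed.

Lemma leaning_trichotomy (x y z : int) : y <= x -> x <= z -> y < z ->
  ((x == y) + (x == z) + ((y < x)%R && (x < z)%R))%N = 1%N.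
Proof.
move=> yx xz yz; have [->|hxy] := eqVneq x y; first by rewrite ltxx /= (lt_eqF yz).
have [->|hxz] := eqVneq x z; first by rewrite ltxx andbF.
by rewrite lt_neqAle eq_sym hxy yx lt_neqAle hxz xz.
Qed.

Section RowCounts.

Context {n : nat} {m : nat -> nat -> int}.
Hypothesis Hm : is_monotone_triangle n m.

Lemma lrs_row i : (1 <= i < n)%N -> (l_cnt n m i + r_cnt n m i + s_cnt n m i)%N = i.
Proof.
move=> hi; rewrite /l_cnt /r_cnt /s_cnt hi -!big_split /=.
rewrite -[in RHS](addnK 1 i) addn1 -[(i.+1 - 1)%N]muln1 -sum_nat_const_nat.
apply: eq_big_nat => j /andP[h1 h2].
case: Hm => row_incr below; have [e1 e2] := below i j h1 h2 (proj2 (andP hi)).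
by apply: leaning_trichotomy => //; apply: row_incr => //; case/andP: hi => _ ->.
Qed.

Lemma ne_forced_count i : (1 <= i < n)%N ->
  (\sum_(1 <= j < i.+2) ne_forced m i.+1 j)%N = r_cnt n m i.
Proof.
move=> hi; rewrite /r_cnt hi big_nat_recl // {1}/ne_forced /= add0n.
by apply: eq_big_nat => j /andP[hj _]; rewrite /ne_forced ltnS hj eq_sym.
Qed.

Lemma nw_forced_count i : (1 <= i < n)%N ->
  (\sum_(1 <= j < i.+2) nw_forced m i.+1 j)%N = l_cnt n m i.
Proof.
move=> hi; rewrite /l_cnt hi big_nat_recr //= {2}/nw_forced ltnn addn0.
by apply: eq_big_nat => j /andP[_ hj]; rewrite /nw_forced hj eq_sym.
Qed.

End RowCounts.

(* The product of the local factors along row i: the entries of row i over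
   a right-leaning (left-leaning) entry of row i - 1 are forced to \nearrow
   (\nwarrow); the remaining s_{i-1} + 1 entries are free. *)
Lemma row_product (R : fieldType) (u v w : R) (X : nat -> R) n (m : nat -> nat -> int) i :
  is_monotone_triangle n m -> (1 <= i <= n)%N ->
  \prod_(1 <= j < i.+1) entry_factor u v w X m i j =
  (u * X i) ^+ r_cnt n m i.-1 * (v * (X i)^-1) ^+ l_cnt n m i.-1 *
  (u * X i + v * (X i)^-1 + w) ^+ (s_cnt n m i.-1).+1.
Proof.
move=> Hm hi.
have excl j : (1 <= j < i.+1)%N -> ~~ (ne_forced m i j && nw_forced m i j).
  by case/andP=> h1 h2; apply: (forced_excl Hm) => //; case/andP: hi.
rewrite /entry_factor prod_trichotomy //; have := count_trichotomy _ _ _ _ excl.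
case: i hi {excl} => [|[|i]] // hi.
  by rewrite !big_nat1 /r_cnt /l_cnt /s_cnt /ne_forced /nw_forced /= expr1 !mul1r.
have hi' : (1 <= i.+1 < n)%N by lia.
have := lrs_row Hm _ hi'.
rewrite (ne_forced_count _ hi') (nw_forced_count _ hi') subn1 /= => lrs total.
by have -> : (\sum_(1 <= j < i.+3) ~~ (ne_forced m i.+2 j || nw_forced m i.+2 j))%N =
  (s_cnt n m i.+1).+1 by lia.
Qed.

(* x ^+ (c_1 + ... + c_{N-1}) as a product indexed by the rows 1..N, when
   c_0 = 0; this matches the row indexing of W_0. *)
Lemma expr_shifted_sum (R : comPzRingType) (x : R) (c : nat -> nat) N : c 0%N = 0%N ->
  x ^+ (\sum_(1 <= i < N) c i) = \prod_(1 <= i < N.+1) x ^+ c i.-1.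
Proof.
move=> c0; rewrite prodrXr [in RHS]big_add1 /=.
by case: N => [|N]; [rewrite !big_geq | rewrite [in RHS]big_ltn // c0 add0n].
Qed.

Theorem mainTheorem7 (R : fieldType) (u v w : R) (X : nat -> R)
  (n : nat) (m : nat -> nat -> int) :
  (forall i : nat, (1 <= i <= n)%N -> X i != 0) ->
  is_monotone_triangle n m ->
  (forall j : nat, (1 <= j)%N -> (j < n)%N -> m n j < m n j.+1) ->
  \sum_(D : {ffun pos n -> 'I_3} | arrowed_ok m D) Wt u v w X m D =
  \prod_(1 <= i < n.+1) (u * X i + v * (X i)^-1 + w) * W0 u v w X n m.
Proof.
move=> hX Hm _.
rewrite (eq_bigr _ (fun D _ => @Wt_factor _ u v w X n m D hX)).
rewrite -mulr_sumr (eq_bigl (fun D : {ffun pos n -> 'I_3} => [forall p, entry_ok m p (D p)])) //.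
rewrite (@sum_ffun_prod _ n (entry_ok m) (fun p => entry_weight u v w (X (prow p)))).
rewrite (eq_bigr _ (fun p _ => @sum_entry_ok _ u v w X n m p Hm)).
rewrite (@prod_pos _ n (entry_factor u v w X m)).
rewrite (eq_big_nat _ _ (fun i (hi : (1 <= i < n.+1)%N) => @row_product _ u v w X n m i Hm hi)).
rewrite /W0 /rM /lM !(@expr_shifted_sum _ _ _ n) // -!big_split /=.
apply: eq_big_nat => i hi; rewrite /dM expfz_shift ?hX // exprS !exprMn.
have -> : w + u * X i + v * (X i)^-1 = u * X i + v * (X i)^-1 + w by ring.
ring.
Qed.
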